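(* Let $P$ be a program which is safe w.r.t. a mode $M$ and satisfies $M$, and whose non-unit clauses are pairwise mutually exclusive w.r.t. $M$. Then for any non-basic atom $A_0$ which satisfies $M$ and any basic goal $G_0$, there exists at most one goal $(A_1,G_1)$ such that $A_1$ is a non-basic atom and $(A_0,G_0)\Rightarrow_P(A_1,G_1)$.
   Context: Syntax. Predicate symbols $\mathit{true}$, $=$, $\neq$ are basic, all others non-basic; the set of function symbols is infinite. Basic atoms: $\mathit{true}$, $t_1=t_2$, $t_1\neq t_2$ (disequation); non-basic atoms $p(t_1,\dots,t_m)$, $p$ non-basic. A goal is a conjunction of atoms ('','' associative, neutral element $\mathit{true}$); it is basic if all its atoms are basic. A clause $C$ is $A\leftarrow G$ with non-basic head $hd(C)$ and body $bd(C)$; it is a unit clause iff its body is basic. A program is a set of clauses. All mgu's are relevant and idempotent. A variable $X$ is a local variable of goal $G$ in clause $H\leftarrow G_1,G,G_2$ iff $X\in vars(G)-vars(H,G_1,G_2)$. Operational semantics (program $P$): (1) $(t_1=t_2,G)\longmapsto_P G\vartheta$ if $t_1,t_2$ unify with mgu $\vartheta$; (2) $(t_1\neq t_2,G)\longmapsto_P G$ if not unifiable; (3) $(A,G)\longmapsto_P(bd(C),G)\vartheta$ if $A$ is non-basic, $C$ a renamed apart clause of $P$ and $\vartheta$ an mgu of $A$ and $hd(C)$ (a step using $C$). $\longmapsto^*_P$ is the reflexive-transitive closure. For $C\in P$ and $A_0$ non-basic, $(A_0,G_0)\Rightarrow_C(A_n,G_n)$ iff there is a derivation $(A_0,G_0)\longmapsto_P\cdots\longmapsto_P(A_n,G_n)$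 with $n>0$ whose first step uses $C$, with $A_i$ basic for $0<i<n$, and either $A_n$ non-basic or $(A_n,G_n)=\mathit{true}$. $(A_0,G_0)\Rightarrow_P G'$ iff $(A_0,G_0)\Rightarrow_C G'$ for some $C\in P$. Modes. A mode for non-basic $p$ of arity $h$ is $p(m_1,\dots,m_h)$, $m_i\in\{+,?\}$; $t_i$ is an input argument iff $m_i=+$; variables in input arguments are input variables. A mode for a program contains exactly one mode per non-basic predicate occurring in it. An atom satisfies $M$ iff $M$ has a mode for its predicate and its input arguments are ground. $P$ satisfies $M$ iff for every non-basic $A_0$ satisfying $M$ and every non-basic $A$ and goal $G$ with $A_0\longmapsto^*_P(A,G)$, $A$ satisfies $M$. A clause $C$ is safe w.r.t. $M$ iff every variable of every disequation in $bd(C)$ is an input variable of $hd(C)$ or a local variable of that disequation in $C$; a program is safe iff all its clauses are. Satisfiability. A ground basic goal holds iff each atom is $\mathit{true}$, $t=t$, or $t_1\neq t_2$ with $t_1,t_2$ distinct ground terms. A conjunction $D$ of disequations is satisfiable w.r.t. a set $V$ of variables iff there is a ground substitution $\sigma$ with domain $V$ such that every ground instance of $D\sigma$ holds. Guard. $grd(C)=bd(C)$ if all atoms of $bd(C)$ are disequations; otherwise it is the conjunction of disequations of $bd(C)$ to the left of the leftmost atom that is not a disequation. Mutual exclusion. For renamed apart clauses $C_1: p(t_1,u_1)\leftarrow G_1$ and $C_2: p(t_2,u_2)\leftarrow G_2$, where $t_1,t_2$ are the tuples of input arguments of $p$ under $M$ and $u_1,u_2$ the remaining arguments, $C_1,C_2$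 are mutually exclusive w.r.t. $M$ iff either $t_1,t_2$ are not unifiable, or they are unifiable via an mgu $\vartheta$ and $(grd(C_1),grd(C_2))\vartheta$ is not satisfiable w.r.t. $vars(t_1,t_2)$ (empty tuples unify via the identity). *)

From Stdlib Require Import List.
Import ListNotations.

Inductive term : Type :=
| Var (x : nat)
| Fn (f : nat) (ts : list term).

Fixpoint tsubst (s : nat -> term) (t : term) : term :=
  match t with
  | Var x => s x
  | Fn f ts => Fn f (map (tsubst s) ts)
  end.

Fixpoint tvars (t : term) : list nat :=
  match t with
  | Var x => [x]
  | Fn _ ts => flat_map tvars ts
  end.

Definition lvars (ts : list term) : list nat := flat_map tvars ts.

Definition ground (t : term) : Prop := tvars t = [].

(* Atoms.  The basic atom [true] is the neutral element of ",", so goals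
   are lists of atoms with [true] omitted; the empty goal is [true]. *)
Inductive atom : Type :=
| AEq (t1 t2 : term)
| ANeq (t1 t2 : term)
| APred (p : nat) (ts : list term).

Definition goal := list atom.

Definition is_basic (a : atom) : Prop :=
  match a with APred _ _ => False | _ => True end.

Definition basic_goal (g : goal) : Prop := forall a, In a g -> is_basic a.

Definition asubst (s : nat -> term) (a : atom) : atom :=
  match a with
  | AEq t1 t2 => AEq (tsubst s t1) (tsubst s t2)
  | ANeq t1 t2 => ANeq (tsubst s t1) (tsubst s t2)
  | APred p ts => APred p (map (tsubst s) ts)
  end.

Definition avars (a : atom) : list nat :=
  match a with
  | AEq t1 t2 | ANeq t1 t2 => tvars t1 ++ tvars t2
  | APred _ ts => lvars ts
  end.

Definition gsubst (s : nat -> term) (g : goal) : goal := map (asubst s) g.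
Definition gvars (g : goal) : list nat := flat_map avars g.

Definition ren (r : nat -> nat) : nat -> term := fun x => Var (r x).
Definition injective_ren (r : nat -> nat) : Prop :=
  forall x y, r x = r y -> x = y.

Definition unifies (s : nat -> term) (l1 l2 : list term) : Prop :=
  map (tsubst s) l1 = map (tsubst s) l2.

Definition unifiable (l1 l2 : list term) : Prop := exists s, unifies s l1 l2.

(* relevant: vars(theta) = dom(theta) u range-vars(theta) within V *)
Definition relevant (s : nat -> term) (V : list nat) : Prop :=
  forall x, s x <> Var x -> In x V /\ (forall y, In y (tvars (s x)) -> In y V).

Definition idempotent (s : nat -> term) : Prop :=
  forall x, tsubst s (s x) = s x.

Definition is_mgu (s : nat -> term) (l1 l2 : list term) : Prop :=
  unifies s l1 l2 /\
  (forall s', unifies s' l1 l2 -> exists e, forall x, s' x = tsubst e (s x)) /\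
  relevant s (lvars (l1 ++ l2)) /\
  idempotent s.

(* clause  p(args) <- body ; the head is non-basic by construction *)
Record clause : Type := Clause { cpred : nat; cargs : list term; cbody : goal }.

Definition chead (C : clause) : atom := APred (cpred C) (cargs C).

Definition csubst (s : nat -> term) (C : clause) : clause :=
  Clause (cpred C) (map (tsubst s) (cargs C)) (gsubst s (cbody C)).

Definition cvars (C : clause) : list nat := lvars (cargs C) ++ gvars (cbody C).

Definition variant_clause (C C' : clause) : Prop :=
  exists r, injective_ren r /\ C' = csubst (ren r) C.

Definition unit_clause (C : clause) : Prop := basic_goal (cbody C).

Definition program := clause -> Prop.

Definition step_using (P : program) (C : clause) (g g' : goal) : Prop :=
  exists p ts G C' s,
    g = APred p ts :: G /\ P C /\
    variant_clause C C' /\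
    (forall x, In x (cvars C') -> ~ In x (gvars g)) /\
    cpred C' = p /\ is_mgu s ts (cargs C') /\
    g' = gsubst s (cbody C' ++ G).

Inductive step (P : program) : goal -> goal -> Prop :=
| st_eq t1 t2 G s :
    is_mgu s [t1] [t2] -> step P (AEq t1 t2 :: G) (gsubst s G)
| st_neq t1 t2 G :
    ~ unifiable [t1] [t2] -> step P (ANeq t1 t2 :: G) G
| st_pred C g g' : step_using P C g g' -> step P g g'.

Inductive steps (P : program) : goal -> goal -> Prop :=
| steps_refl g : steps P g g
| steps_trans g g' g'' : step P g g' -> steps P g' g'' -> steps P g g''.

Definition final_goal (g : goal) : Prop :=
  g = [] \/ exists p ts G, g = APred p ts :: G.

Inductive basic_run (P : program) : goal -> goal -> Prop :=
| br_stop g : final_goal g -> basic_run P g g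
| br_step a G g1 g2 :
    is_basic a -> step P (a :: G) g1 -> basic_run P g1 g2 ->
    basic_run P (a :: G) g2.

Definition derives_with (P : program) (C : clause) (g g' : goal) : Prop :=
  exists g1, step_using P C g g1 /\ basic_run P g1 g'.

Definition derives (P : program) (g g' : goal) : Prop :=
  exists C, P C /\ derives_with P C g g'.

(* M p h = Some ms : the mode of the predicate p of arity h;
   true = '+' (input), false = '?' *)
Definition mode := nat -> nat -> option (list bool).

Definition input_args (ms : list bool) (ts : list term) : list term :=
  map fst (filter snd (combine ts ms)).

Definition input_vars (M : mode) (p : nat) (ts : list term) : list nat :=
  match M p (length ts) with
  | Some ms => lvars (input_args ms ts)
  | None => []
  end.

Definition atom_sat (M : mode) (a : atom) : Prop :=
  match a with
  | APred p ts => exists ms, M p (length ts) = Some ms /\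
                   (forall t, In t (input_args ms ts) -> ground t)
  | _ => False
  end.

Definition mode_for (M : mode) (P : program) : Prop :=
  (forall p h ms, M p h = Some ms -> length ms = h) /\
  (forall C, P C -> forall p ts, In (APred p ts) (chead C :: cbody C) ->
     exists ms, M p (length ts) = Some ms).

Definition prog_satisfies (M : mode) (P : program) : Prop :=
  forall p0 ts0 p ts G,
    atom_sat M (APred p0 ts0) ->
    steps P [APred p0 ts0] (APred p ts :: G) ->
    atom_sat M (APred p ts).

(* safety: each variable of a disequation in the body is an input variable
   of the head or a local variable of that disequation *)
Definition safe_clause (M : mode) (C : clause) : Prop :=
  forall i t1 t2, nth_error (cbody C) i = Some (ANeq t1 t2) ->
  forall x, In x (tvars t1 ++ tvars t2) ->
    In x (input_vars M (cpred C) (cargs C)) \/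
    ~ In x (lvars (cargs C) ++ gvars (firstn i (cbody C))
                            ++ gvars (skipn (S i) (cbody C))).

Definition safe (M : mode) (P : program) : Prop :=
  forall C, P C -> safe_clause M C.

Definition holds (g : goal) : Prop :=
  forall a, In a g ->
    match a with
    | AEq t1 t2 => t1 = t2
    | ANeq t1 t2 => ground t1 /\ ground t2 /\ t1 <> t2
    | APred _ _ => False
    end.

Definition satisfiable (D : goal) (V : list nat) : Prop :=
  exists s,
    (forall x, In x V -> ground (s x)) /\
    (forall x, ~ In x V -> s x = Var x) /\
    (forall t, (forall x, In x (gvars (gsubst s D)) -> ground (t x)) ->
               holds (gsubst t (gsubst s D))).

Fixpoint guard (g : goal) : goal :=
  match g with
  | ANeq t1 t2 :: r => ANeq t1 t2 :: guard r
  | _ => []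
  end.

Definition mutually_exclusive (M : mode) (C1 C2 : clause) : Prop :=
  forall C1' C2',
    variant_clause C1 C1' -> variant_clause C2 C2' ->
    (forall x, In x (cvars C1') -> ~ In x (cvars C2')) ->
    cpred C1' = cpred C2' -> length (cargs C1') = length (cargs C2') ->
    forall ms, M (cpred C1') (length (cargs C1')) = Some ms ->
    let t1 := input_args ms (cargs C1') in
    let t2 := input_args ms (cargs C2') in
    ~ unifiable t1 t2 \/
    exists s, is_mgu s t1 t2 /\
      ~ satisfiable (gsubst s (guard (cbody C1') ++ guard (cbody C2')))
                    (lvars (t1 ++ t2)).

Definition goal_variant (g1 g2 : goal) : Prop :=
  exists r, injective_ren r /\ gsubst (ren r) g1 = g2.

(* If both derivations start with the same clause, the two resolvents are
   variants, because renamed-apart variants of a clause and mgu's are unique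
   up to renaming, and the basic steps that follow are deterministic up to
   renaming as well.

   If they start with different clauses, neither is a unit clause, since a
   unit clause only leads to basic goals.  A run reaching a non-basic atom has
   executed the guard, so each guard disequation, instantiated by the head
   mgu, is non-unifiable.  The inputs of A0 are ground, hence the mgu grounds
   the input variables of the clause; by safety the other variables of a
   guard disequation are local and untouched by the mgu.  So every
   substitution agreeing with the mgu on the input variables refutes each
   guard disequation.  Gluing the two mgu's on renamed-apart variants gives a
   unifier of the input arguments under which both guards are satisfiable,
   contradicting mutual exclusion. *)

From Stdlib Require Import List Arith Lia Classical ClassicalEpsilon.
Import ListNotations.

(** * Substitutions *)

Fixpoint term_nested_ind (Q : term -> Prop) (HV : forall x, Q (Var x))
  (HF : forall f ts, Forall Q ts -> Q (Fn f ts)) (t : term) : Q t :=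
  match t with
  | Var x => HV x
  | Fn f ts => HF f ts ((fix go (l : list term) : Forall Q l :=
      match l with
      | [] => Forall_nil _
      | u :: l' => Forall_cons _ (term_nested_ind Q HV HF u) (go l')
      end) ts)
  end.

Lemma tsubst_comp a b u : tsubst a (tsubst b u) = tsubst (fun x => tsubst a (b x)) u.
Proof.
  induction u as [x|f ts IH] using term_nested_ind; simpl; auto.
  f_equal. rewrite map_map. induction IH; simpl; f_equal; auto.
Qed.

Lemma tsubst_ext a b u : (forall x, In x (tvars u) -> a x = b x) -> tsubst a u = tsubst b u.
Proof.
  induction u as [x|f ts IH] using term_nested_ind; simpl; intros E.
  - auto.
  - f_equal. induction IH as [|u ts Hu _ IHts]; simpl in *; auto.
    f_equal; [apply Hu | apply IHts]; intros; apply E, in_or_app; auto.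
Qed.

Lemma tsubst_var u : tsubst Var u = u.
Proof.
  induction u as [x|f ts IH] using term_nested_ind; simpl; auto.
  f_equal. induction IH; simpl; f_equal; auto.
Qed.

Lemma in_tvars_tsubst s u y :
  In y (tvars (tsubst s u)) <-> exists x, In x (tvars u) /\ In y (tvars (s x)).
Proof.
  induction u as [x|f ts IH] using term_nested_ind; simpl.
  - split; [eauto | intros [z [[<-|[]] H]]; auto].
  - induction IH as [|u ts Hu _ IHts]; simpl.
    + split; [tauto | intros [z [[] _]]].
    + rewrite in_app_iff, Hu, IHts. split.
      * intros [[z [A B]]|[z [A B]]]; exists z; rewrite in_app_iff; auto.
      * intros [z [A B]]. rewrite in_app_iff in A. destruct A; [left|right]; eauto.
Qed.

Lemma tvars_ren r u : tvars (tsubst (ren r) u) = map r (tvars u).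
Proof.
  induction u as [x|f ts IH] using term_nested_ind; simpl; auto.
  induction IH; simpl; auto. rewrite map_app; f_equal; auto.
Qed.

Lemma tsubst_fixed_vars a u : tsubst a u = u -> forall y, In y (tvars u) -> a y = Var y.
Proof.
  induction u as [x|f ts IH] using term_nested_ind; simpl; intros E y I.
  - destruct I as [<-|[]]; auto.
  - injection E as E. induction IH as [|u ts Hu _ IHts]; simpl in *; [destruct I|].
    injection E as E1 E2. apply in_app_iff in I. destruct I; auto.
Qed.

Lemma ground_iff u : ground u <-> forall x, ~ In x (tvars u).
Proof.
  unfold ground. destruct (tvars u) as [|y l].
  - split; [intros _ x [] | auto].
  - split; [discriminate | intros H; exfalso; apply (H y); left; auto].
Qed.

Lemma ground_tsubst_id s u : ground u -> tsubst s u = u.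
Proof.
  intros G. rewrite <- (tsubst_var u) at 2. apply tsubst_ext.
  intros x I. destruct (proj1 (ground_iff u) G x I).
Qed.

Lemma ground_tsubst s u :
  (forall x, In x (tvars u) -> ground (s x)) -> ground (tsubst s u).
Proof.
  intros H. apply ground_iff. intros y I. apply in_tvars_tsubst in I.
  destruct I as [x [Ix Iy]]. exact (proj1 (ground_iff _) (H x Ix) y Iy).
Qed.

Lemma ground_tsubst_var s u x : In x (tvars u) -> ground (tsubst s u) -> ground (s x).
Proof.
  intros Ix G. apply ground_iff. intros y Iy. apply (proj1 (ground_iff _) G y).
  apply in_tvars_tsubst. eauto.
Qed.

Lemma lvars_in x l : In x (lvars l) <-> exists t, In t l /\ In x (tvars t).
Proof. unfold lvars. rewrite in_flat_map. firstorder. Qed.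

Lemma lvars_app l1 l2 : lvars (l1 ++ l2) = lvars l1 ++ lvars l2.
Proof. apply flat_map_app. Qed.

Lemma lvars_ren r l : lvars (map (tsubst (ren r)) l) = map r (lvars l).
Proof. unfold lvars. induction l; simpl; auto. rewrite map_app, tvars_ren, IHl; auto. Qed.

Lemma in_lvars_map_tsubst s l y :
  In y (lvars (map (tsubst s) l)) <-> exists x, In x (lvars l) /\ In y (tvars (s x)).
Proof.
  rewrite lvars_in. setoid_rewrite lvars_in. split.
  - intros [t [It Iy]]. apply in_map_iff in It. destruct It as [u [<- Iu]].
    apply in_tvars_tsubst in Iy. destruct Iy as [x [Ix Iy]]. eauto.
  - intros [x [[u [Iu Ix]] Iy]]. exists (tsubst s u). split.
    + apply in_map; auto.
    + apply in_tvars_tsubst. eauto.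
Qed.

Lemma map_tsubst_comp a b l :
  map (tsubst a) (map (tsubst b) l) = map (tsubst (fun x => tsubst a (b x))) l.
Proof. rewrite map_map. apply map_ext. intros; apply tsubst_comp. Qed.

Lemma map_tsubst_ext a b l :
  (forall x, In x (lvars l) -> a x = b x) -> map (tsubst a) l = map (tsubst b) l.
Proof.
  intros H. apply map_ext_in. intros t I. apply tsubst_ext.
  intros x Ix. apply H, lvars_in. eauto.
Qed.

Lemma map_tsubst_var l : map (tsubst Var) l = l.
Proof. rewrite <- (map_id l) at 2. apply map_ext, tsubst_var. Qed.

Lemma asubst_comp a b x : asubst a (asubst b x) = asubst (fun y => tsubst a (b y)) x.
Proof. destruct x; simpl; rewrite ?tsubst_comp, ?map_tsubst_comp; auto. Qed.

Lemma gsubst_comp a b g : gsubst a (gsubst b g) = gsubst (fun y => tsubst a (b y)) g.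
Proof. unfold gsubst. rewrite map_map. apply map_ext, asubst_comp. Qed.

Lemma asubst_ext a b x :
  (forall y, In y (avars x) -> a y = b y) -> asubst a x = asubst b x.
Proof.
  destruct x; simpl; intros H; f_equal;
    try apply tsubst_ext; try apply map_tsubst_ext; intros; apply H; rewrite ?in_app_iff; auto.
Qed.

Lemma gvars_in x g : In x (gvars g) <-> exists a, In a g /\ In x (avars a).
Proof. unfold gvars. rewrite in_flat_map. firstorder. Qed.

Lemma gsubst_ext a b g :
  (forall y, In y (gvars g) -> a y = b y) -> gsubst a g = gsubst b g.
Proof.
  intros H. apply map_ext_in. intros x I. apply asubst_ext.
  intros y Iy. apply H, gvars_in. eauto.
Qed.

Lemma gsubst_var g : gsubst Var g = g.
Proof.
  rewrite <- (map_id g) at 2. apply map_ext.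
  intros []; simpl; rewrite ?tsubst_var, ?map_tsubst_var; auto.
Qed.

Lemma gsubst_app s g1 g2 : gsubst s (g1 ++ g2) = gsubst s g1 ++ gsubst s g2.
Proof. apply map_app. Qed.

Lemma gvars_app g1 g2 : gvars (g1 ++ g2) = gvars g1 ++ gvars g2.
Proof. apply flat_map_app. Qed.

Lemma map_tsubst_fixed f l :
  (forall x, In x (lvars l) -> f x = x) -> map (tsubst (ren f)) l = l.
Proof.
  intros H. rewrite <- (map_tsubst_var l) at 2. apply map_tsubst_ext.
  intros x Ix. unfold ren. rewrite H; auto.
Qed.

Lemma gsubst_fixed f g :
  (forall x, In x (gvars g) -> f x = x) -> gsubst (ren f) g = g.
Proof.
  intros H. rewrite <- (gsubst_var g) at 2. apply gsubst_ext.
  intros x Ix. unfold ren. rewrite H; auto.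
Qed.

Lemma in_avars_asubst s a y :
  In y (avars (asubst s a)) <-> exists x, In x (avars a) /\ In y (tvars (s x)).
Proof.
  destruct a; simpl; [| |apply in_lvars_map_tsubst];
    rewrite !in_app_iff, !in_tvars_tsubst; split;
    first [ intros [[x [? ?]]|[x [? ?]]]
          | intros [x [Ix ?]]; apply in_app_iff in Ix as [?|?] ];
    eauto 6 using in_or_app.
Qed.

Lemma in_gvars_gsubst s g y :
  In y (gvars (gsubst s g)) <-> exists x, In x (gvars g) /\ In y (tvars (s x)).
Proof.
  rewrite gvars_in. setoid_rewrite gvars_in. split.
  - intros [b [Ib Iy]]. apply in_map_iff in Ib. destruct Ib as [a [<- Ia]].
    apply in_avars_asubst in Iy. destruct Iy as [x [Ix Iy]]. eauto.
  - intros [x [[a [Ia Ix]] Iy]]. exists (asubst s a). split.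
    + apply in_map; auto.
    + apply in_avars_asubst. eauto.
Qed.

Lemma gvars_ren r g : gvars (gsubst (ren r) g) = map r (gvars g).
Proof.
  unfold gvars, gsubst. induction g as [|a g IH]; simpl; auto.
  rewrite map_app, IH. f_equal.
  destruct a; simpl; rewrite ?map_app, ?tvars_ren, ?lvars_ren; auto.
Qed.

Lemma cvars_ren r C : cvars (csubst (ren r) C) = map r (cvars C).
Proof. unfold cvars, csubst; simpl. rewrite map_app, lvars_ren, gvars_ren; auto. Qed.

Lemma csubst_comp a b C : csubst a (csubst b C) = csubst (fun y => tsubst a (b y)) C.
Proof. unfold csubst; simpl. rewrite map_tsubst_comp, gsubst_comp. reflexivity. Qed.

Lemma csubst_ext a b C :
  (forall y, In y (cvars C) -> a y = b y) -> csubst a C = csubst b C.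
Proof.
  intros H. unfold csubst, cvars in *. f_equal.
  - apply map_tsubst_ext. intros; apply H, in_app_iff; auto.
  - apply gsubst_ext. intros; apply H, in_app_iff; auto.
Qed.

(** * Renamings and most general unifiers *)

Lemma inverse_ren r : injective_ren r -> exists ri : nat -> nat, forall x, ri (r x) = x.
Proof.
  intros Hr. exists (fun y => epsilon (inhabits 0) (fun x => r x = y)).
  intros x. apply Hr. apply (epsilon_spec (inhabits 0) (fun z => r z = r x)). eauto.
Qed.

Lemma injective_extension (D : list nat) (f : nat -> nat) :
  (forall x y, In x D -> In y D -> f x = f y -> x = y) ->
  exists r, injective_ren r /\ forall x, In x D -> r x = f x.
Proof.
  intros Hf. set (N := S (list_max (map f D))).
  assert (Hlt : forall x, In x D -> f x < N).
  { intros x Ix. enough (f x <= list_max (map f D)) by lia.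
    apply (proj1 (Forall_forall _ _) (proj1 (list_max_le _ _) (le_n _))), in_map, Ix. }
  exists (fun x => if in_dec Nat.eq_dec x D then f x else x + N). split.
  - intros x y.
    destruct (in_dec Nat.eq_dec x D) as [Ix|Ix], (in_dec Nat.eq_dec y D) as [Iy|Iy];
      intros E; auto; [pose proof (Hlt x Ix) | pose proof (Hlt y Iy) |]; lia.
  - intros x Ix. destruct in_dec; tauto.
Qed.

Lemma inverted_subst_is_renaming (a b : nat -> term) (D : list nat) :
  (forall y, In y D -> tsubst b (a y) = Var y) ->
  exists r, injective_ren r /\ forall y, In y D -> a y = Var (r y).
Proof.
  intros H. set (f := fun y => match a y with Var z => z | _ => y end).
  assert (Hf : forall y, In y D -> a y = Var (f y) /\ b (f y) = Var y).
  { intros y Iy. specialize (H y Iy). unfold f. destruct (a y); simpl in H; [auto|discriminate]. }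
  destruct (injective_extension D f) as [r [Hr Er]].
  { intros x y Ix Iy E. apply Hf in Ix as [_ Bx], Iy as [_ By]. congruence. }
  exists r. split; auto. intros y Iy. rewrite Er by auto. apply Hf, Iy.
Qed.

Lemma goal_variant_of_instances s1 s2 e e' G :
  (forall x, In x (gvars G) -> s2 x = tsubst e (s1 x)) ->
  (forall x, In x (gvars G) -> s1 x = tsubst e' (s2 x)) ->
  goal_variant (gsubst s1 G) (gsubst s2 G).
Proof.
  intros H2 H1.
  destruct (inverted_subst_is_renaming e e' (gvars (gsubst s1 G))) as [r [Hr Er]].
  { intros y Iy. apply in_gvars_gsubst in Iy. destruct Iy as [x [Ix Iy]].
    apply (tsubst_fixed_vars (fun z => tsubst e' (e z)) (s1 x)); auto.
    rewrite <- tsubst_comp, <- H2, <- H1; auto. }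
  exists r. split; auto.
  rewrite gsubst_comp. apply gsubst_ext. intros x Ix. rewrite H2 by auto.
  apply tsubst_ext. intros y Iy. symmetry. apply Er, in_gvars_gsubst. eauto.
Qed.

Lemma mgu_variant s s' a b l1 l2 G :
  is_mgu s l1 l2 -> is_mgu s' (map (tsubst a) l1) (map (tsubst a) l2) ->
  (forall x, In x (lvars (l1 ++ l2) ++ gvars G) -> tsubst b (a x) = Var x) ->
  goal_variant (gsubst s G) (gsubst s' (gsubst a G)).
Proof.
  intros [U [Gen _]] [U' [Gen' _]] Hba.
  destruct (Gen (fun x => tsubst s' (a x))) as [e He].
  { unfold unifies in *. rewrite <- !map_tsubst_comp. exact U'. }
  destruct (Gen' (fun y => tsubst s (b y))) as [e' He'].
  { unfold unifies in *. rewrite !map_tsubst_comp.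
    rewrite (map_tsubst_ext _ s l1), (map_tsubst_ext _ s l2); auto;
      intros x Ix; rewrite <- tsubst_comp, Hba; auto;
      rewrite lvars_app, !in_app_iff; auto. }
  rewrite gsubst_comp. apply (goal_variant_of_instances _ _ e e'); intros x Ix; auto.
  rewrite tsubst_comp, (tsubst_ext _ (fun y => tsubst s (b y))) by (intros; symmetry; apply He').
  rewrite <- tsubst_comp, Hba; auto. apply in_app_iff; auto.
Qed.

Definition restrict (s : nat -> term) (V : list nat) (x : nat) : term :=
  if in_dec Nat.eq_dec x V then s x else Var x.

Lemma mgu_absorbs th l1 l2 g :
  is_mgu th l1 l2 -> unifies g l1 l2 -> forall x, tsubst g (th x) = g x.
Proof.
  intros [_ [Gen [_ Idem]]] U x. destruct (Gen g U) as [e He].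
  rewrite (tsubst_ext g (fun y => tsubst e (th y))) by auto.
  rewrite <- tsubst_comp, Idem. symmetry. apply He.
Qed.

Lemma relevant_vars s V x y : relevant s V -> In x V -> In y (tvars (s x)) -> In y V.
Proof.
  intros R Ix Iy. destruct (classic (s x = Var x)) as [E|E].
  - rewrite E in Iy. destruct Iy as [<-|[]]. exact Ix.
  - exact (proj2 (R x E) y Iy).
Qed.

Lemma relevant_fixes s V x : relevant s V -> ~ In x V -> s x = Var x.
Proof. intros R n. apply NNPP. intros E. exact (n (proj1 (R x E))). Qed.

Lemma mgu_restrict th l1 l2 g :
  is_mgu th l1 l2 -> unifies g l1 l2 ->
  forall x, In x (lvars (l1 ++ l2)) -> tsubst (restrict g (lvars (l1 ++ l2))) (th x) = g x.
Proof.
  intros Hm U x Ix. rewrite <- (mgu_absorbs _ _ _ _ Hm U). apply tsubst_ext.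
  intros y Iy. unfold restrict. destruct in_dec as [_|n]; auto.
  destruct (n (relevant_vars _ _ _ _ (proj1 (proj2 (proj2 Hm))) Ix Iy)).
Qed.

Lemma renamed_apart_variants C r1 r2 W :
  injective_ren r1 -> injective_ren r2 ->
  (forall x, In x (cvars (csubst (ren r1) C)) -> ~ In x W) ->
  (forall x, In x (cvars (csubst (ren r2) C)) -> ~ In x W) ->
  exists f g : nat -> nat,
    csubst (ren f) (csubst (ren r1) C) = csubst (ren r2) C /\
    (forall x, In x W -> f x = x) /\
    (forall x, In x (cvars (csubst (ren r1) C) ++ W) -> g (f x) = x).
Proof.
  intros H1 H2 A1 A2.
  destruct (inverse_ren r1 H1) as [ri1 Hri1]. destruct (inverse_ren r2 H2) as [ri2 Hri2].
  set (V1 := cvars (csubst (ren r1) C)) in *. set (V2 := cvars (csubst (ren r2) C)) in *.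
  assert (I1 : forall x, In x (cvars C) -> In (r1 x) V1).
  { intros x Ix. unfold V1. rewrite cvars_ren. apply in_map, Ix. }
  assert (I2 : forall x, In x (cvars C) -> In (r2 x) V2).
  { intros x Ix. unfold V2. rewrite cvars_ren. apply in_map, Ix. }
  exists (fun y => if in_dec Nat.eq_dec y V1 then r2 (ri1 y) else y),
         (fun y => if in_dec Nat.eq_dec y V2 then r1 (ri2 y) else y).
  split; [|split].
  - rewrite csubst_comp. apply csubst_ext. intros x Ix. unfold ren. simpl.
    destruct in_dec as [_|n]; [rewrite Hri1; auto | destruct (n (I1 x Ix))].
  - intros x Ix. destruct in_dec as [I|_]; [destruct (A1 x I Ix) | auto].
  - intros x Ix. destruct (in_dec Nat.eq_dec x V1) as [I|I].
    + unfold V1 in I. rewrite cvars_ren in I. apply in_map_iff in I.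
      destruct I as [x0 [<- I]]. rewrite Hri1.
      destruct in_dec as [_|n]; [rewrite Hri2; auto | destruct (n (I2 x0 I))].
    + apply in_app_iff in Ix. destruct Ix as [Ix|Ix]; [tauto|].
      destruct in_dec as [J|_]; [destruct (A2 x J Ix) | auto].
Qed.

(** * Derivation steps up to renaming *)

Lemma step_using_inv P C p ts G h :
  step_using P C (APred p ts :: G) h ->
  exists r s, injective_ren r /\
    (forall x, In x (cvars (csubst (ren r) C)) -> ~ In x (lvars ts ++ gvars G)) /\
    cpred C = p /\ is_mgu s ts (cargs (csubst (ren r) C)) /\
    h = gsubst s (cbody (csubst (ren r) C) ++ G).
Proof.
  intros [p' [ts' [G' [C' [s [E [_ [[r [Hr ->]] [Ap [Ep [Hm ->]]]]]]]]]]].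
  injection E as <- <- <-. exists r, s. exact (conj Hr (conj Ap (conj Ep (conj Hm eq_refl)))).
Qed.

Lemma resolvent_variant P C p ts G h1 h2 :
  step_using P C (APred p ts :: G) h1 -> step_using P C (APred p ts :: G) h2 ->
  goal_variant h1 h2.
Proof.
  intros S1 S2.
  destruct (step_using_inv _ _ _ _ _ _ S1) as [r1 [s1 [Hr1 [A1 [_ [M1 ->]]]]]].
  destruct (step_using_inv _ _ _ _ _ _ S2) as [r2 [s2 [Hr2 [A2 [_ [M2 ->]]]]]].
  destruct (renamed_apart_variants C r1 r2 _ Hr1 Hr2 A1 A2) as [f [g [Ef [Fw Gf]]]].
  set (C1 := csubst (ren r1) C) in *.
  rewrite <- Ef in M2 |- *.
  change (cargs (csubst (ren f) C1)) with (map (tsubst (ren f)) (cargs C1)) in M2.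
  change (cbody (csubst (ren f) C1)) with (gsubst (ren f) (cbody C1)).
  rewrite <- (map_tsubst_fixed f ts) in M2 by (intros; apply Fw, in_app_iff; auto).
  rewrite <- (gsubst_fixed f G) at 2 by (intros; apply Fw, in_app_iff; auto).
  rewrite <- gsubst_app.
  apply (mgu_variant s1 s2 (ren f) (ren g) ts (cargs C1)); auto.
  intros x Ix. unfold ren. simpl. f_equal. apply Gf.
  rewrite lvars_app, gvars_app in Ix. unfold cvars. rewrite !in_app_iff in Ix |- *. tauto.
Qed.

Lemma final_goal_not_basic a G : is_basic a -> ~ final_goal (a :: G).
Proof. intros B [H|[p [ts [G' H]]]]; [discriminate|]. injection H as -> _. exact B. Qed.

Lemma step_eq_inv P t1 t2 G g :
  step P (AEq t1 t2 :: G) g -> exists s, is_mgu s [t1] [t2] /\ g = gsubst s G.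
Proof.
  intros H. inversion H as [? ? ? s Hs| |C ? ? [p [ts [G' [C' [s [E _]]]]]]]; subst; eauto.
  discriminate.
Qed.

Lemma step_neq_inv P t1 t2 G g :
  step P (ANeq t1 t2 :: G) g -> ~ unifiable [t1] [t2] /\ g = G.
Proof.
  intros H. inversion H as [| ? ? ? NU |C ? ? [p [ts [G' [C' [s [E _]]]]]]]; subst; auto.
  discriminate.
Qed.

Lemma basic_run_variant P g gf : basic_run P g gf ->
  forall r gf', injective_ren r -> basic_run P (gsubst (ren r) g) gf' -> goal_variant gf gf'.
Proof.
  induction 1 as [g Hf|a G g1 g2 Ba S R IH]; intros r gf' Hr R2.
  - destruct Hf as [->|[p [ts [G ->]]]].
    + inversion R2; subst. exists (fun x => x). split; [intros x y; auto | reflexivity].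
    + change (gsubst (ren r) (APred p ts :: G))
        with (APred p (map (tsubst (ren r)) ts) :: gsubst (ren r) G) in R2.
      inversion R2 as [? _|? ? ? ? Ba]; subst; [exists r; auto | destruct Ba].
  - change (gsubst (ren r) (a :: G)) with (asubst (ren r) a :: gsubst (ren r) G) in R2.
    inversion R2 as [? Hf|? ? ? ? _ S' R' E1 E2]; subst.
    + exfalso. apply (final_goal_not_basic (asubst (ren r) a) (gsubst (ren r) G)); auto.
      destruct a; simpl; auto.
    + destruct a as [t1 t2|t1 t2|p ts]; simpl in S'; [| |destruct Ba].
      * apply step_eq_inv in S as [s [Ms ->]]. apply step_eq_inv in S' as [s' [Ms' ->]].
        destruct (inverse_ren r Hr) as [ri Hri].
        destruct (mgu_variant s s' (ren r) (ren ri) [t1] [t2] G Ms Ms') as [r1 [Hr1 E]].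
        { intros x _. unfold ren. simpl. rewrite Hri. reflexivity. }
        apply (IH r1); auto. rewrite E. exact R'.
      * apply step_neq_inv in S as [_ ->]. apply step_neq_inv in S' as [_ ->]. eauto.
Qed.

Lemma basic_gsubst s g : basic_goal g -> basic_goal (gsubst s g).
Proof.
  intros Bg b Ib. apply in_map_iff in Ib as [a [<- Ia]].
  specialize (Bg a Ia). destruct a; simpl in *; auto.
Qed.

Lemma basic_run_basic P g gf : basic_run P g gf -> basic_goal g -> basic_goal gf.
Proof.
  induction 1 as [g Hf|a G g1 g2 Ba S R IH]; intros Bg; auto.
  apply IH. destruct a as [t1 t2|t1 t2|p ts]; [| |destruct Ba].
  - apply step_eq_inv in S as [s [_ ->]]. apply basic_gsubst. intros b Ib; apply Bg; right; auto.
  - apply step_neq_inv in S as [_ ->]. intros b Ib; apply Bg; right; auto.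
Qed.

Lemma derives_with_nonbasic_not_unit P C p0 ts0 G0 p ts G :
  derives_with P C (APred p0 ts0 :: G0) (APred p ts :: G) -> basic_goal G0 ->
  ~ unit_clause C.
Proof.
  intros [h [S R]] BG U.
  destruct (step_using_inv _ _ _ _ _ _ S) as [r [s [_ [_ [_ [_ ->]]]]]].
  refine (basic_run_basic _ _ _ R _ (APred p ts) (or_introl eq_refl)).
  apply basic_gsubst. intros a Ia. apply in_app_iff in Ia as [Ia|Ia]; auto.
  exact (basic_gsubst (ren r) _ U a Ia).
Qed.

(** * Guards, safety and mutual exclusion *)

Lemma guard_in b a : In a (guard b) -> In a b.
Proof. induction b as [|[] b IH]; simpl; tauto. Qed.

Lemma guard_neq b a : In a (guard b) -> exists u1 u2, a = ANeq u1 u2.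
Proof. induction b as [|[] b IH]; simpl; try tauto. intros [<-|I]; eauto. Qed.

Lemma guard_gsubst s b : guard (gsubst s b) = gsubst s (guard b).
Proof. induction b as [|[] b IH]; simpl; f_equal; auto. Qed.

Lemma basic_run_passes_guard P b rest p ts G :
  basic_run P (b ++ rest) (APred p ts :: G) ->
  forall u1 u2, In (ANeq u1 u2) (guard b) -> ~ unifiable [u1] [u2].
Proof.
  induction b as [|a b IH]; simpl; [tauto|]. intros R u1 u2.
  destruct a as [|v1 v2|]; simpl; try tauto.
  inversion R as [|? ? ? ? _ S R']; subst.
  apply step_neq_inv in S as [NU ->].
  intros [E|I]; [injection E as <- <-; exact NU | exact (IH R' u1 u2 I)].
Qed.

Lemma input_args_map ms f ts : input_args ms (map f ts) = map f (input_args ms ts).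
Proof.
  unfold input_args. revert ms; induction ts; intros [|[] ms]; simpl; f_equal; auto.
Qed.

Lemma input_args_in ms ts t : In t (input_args ms ts) -> In t ts.
Proof.
  unfold input_args. revert ms; induction ts; intros [|[] ms]; simpl; try tauto.
  - intros [->|H]; eauto.
  - eauto.
Qed.

Lemma input_vars_ren M p r ts :
  input_vars M p (map (tsubst (ren r)) ts) = map r (input_vars M p ts).
Proof.
  unfold input_vars. rewrite length_map.
  destruct (M p (length ts)); [rewrite input_args_map, lvars_ren|]; reflexivity.
Qed.

Lemma safe_clause_ren M C r :
  injective_ren r -> safe_clause M C -> safe_clause M (csubst (ren r) C).
Proof.
  intros Hr HC i t1 t2 Hi x Ix.
  change (cbody (csubst (ren r) C)) with (map (asubst (ren r)) (cbody C)) in *.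
  rewrite nth_error_map in Hi.
  destruct (nth_error (cbody C) i) as [[|v1 v2|]|] eqn:E; try discriminate.
  injection Hi as <- <-. rewrite !tvars_ren, <- map_app in Ix.
  apply in_map_iff in Ix as [x0 [<- Ix0]].
  destruct (HC i v1 v2 E x0 Ix0) as [Inp|Loc]; [left|right].
  - simpl. rewrite input_vars_ren. apply in_map, Inp.
  - rewrite firstn_map, skipn_map. simpl. rewrite lvars_ren.
    change (map (asubst (ren r)) ?l) with (gsubst (ren r) l). rewrite !gvars_ren, <- !map_app.
    intros I. apply in_map_iff in I as [y [Ey Iy]]. apply Hr in Ey as ->. exact (Loc Iy).
Qed.

(* [om] unifies the two [s]-instances: by safety, each variable of the
   disequation is either an input variable, mapped by [s] to a ground term on
   which [om] agrees, or a local one, which [s] leaves in place. *)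
Lemma safe_disequation_instances M C s om u1 u2 :
  safe_clause M C ->
  (forall x, In x (cvars C) -> ~ In x (lvars (cargs C)) -> s x = Var x) ->
  (forall x, In x (input_vars M (cpred C) (cargs C)) -> ground (s x) /\ om x = s x) ->
  In (ANeq u1 u2) (cbody C) -> ~ unifiable [tsubst s u1] [tsubst s u2] ->
  tsubst om u1 <> tsubst om u2.
Proof.
  intros HC Hloc Hin I NU E. apply NU. exists om.
  destruct (In_nth_error _ _ I) as [i Hi].
  assert (K : forall x, In x (tvars u1 ++ tvars u2) -> tsubst om (s x) = om x).
  { intros x Ix. destruct (HC i u1 u2 Hi x Ix) as [Inp|Loc].
    - destruct (Hin x Inp) as [G ->]. apply ground_tsubst_id, G.
    - rewrite Hloc; auto.
      + unfold cvars. apply in_app_iff. right. apply gvars_in. eauto.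
      + intros Ix'. apply Loc, in_app_iff. auto. }
  assert (K' : forall u, (forall x, In x (tvars u) -> In x (tvars u1 ++ tvars u2)) ->
                 tsubst om (tsubst s u) = tsubst om u).
  { intros u Hu. rewrite tsubst_comp. apply tsubst_ext. auto. }
  unfold unifies. simpl. rewrite !K', E; auto; intros; apply in_app_iff; auto.
Qed.

Definition instantiates_inputs (ms : list bool) (C : clause) (s : nat -> term)
    (ts : list term) :=
  map (tsubst s) (input_args ms (cargs C)) = input_args ms ts.

Definition guard_separated (ms : list bool) (C : clause) (s : nat -> term) :=
  forall om, (forall x, In x (lvars (input_args ms (cargs C))) -> om x = s x) ->
  forall u1 u2, In (ANeq u1 u2) (guard (cbody C)) -> tsubst om u1 <> tsubst om u2.

Lemma instantiates_inputs_ground ms C s ts :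
  instantiates_inputs ms C s ts -> (forall t, In t (input_args ms ts) -> ground t) ->
  forall x, In x (lvars (input_args ms (cargs C))) -> ground (s x).
Proof.
  intros Hin Hg x Ix. apply lvars_in in Ix as [t [It Ixt]].
  apply (ground_tsubst_var s t x Ixt), Hg. rewrite <- Hin. apply in_map, It.
Qed.

Lemma derivation_separates_guard P M C p0 ts0 G0 ms p ts G :
  safe_clause M C -> M p0 (length ts0) = Some ms ->
  (forall t, In t (input_args ms ts0) -> ground t) ->
  derives_with P C (APred p0 ts0 :: G0) (APred p ts :: G) ->
  exists C', variant_clause C C' /\ cpred C' = p0 /\ length (cargs C') = length ts0 /\
    exists s, instantiates_inputs ms C' s ts0 /\ guard_separated ms C' s.
Proof.
  intros HC Hms Hgr [h [S R]].
  destruct (step_using_inv _ _ _ _ _ _ S) as [r [s [Hr [Ap [Ep [[U [_ [Rel _]]] ->]]]]]].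
  set (C' := csubst (ren r) C) in *.
  assert (L : length (cargs C') = length ts0).
  { apply (f_equal (@length _)) in U. rewrite !length_map in U. auto. }
  assert (Hin : instantiates_inputs ms C' s ts0).
  { unfold instantiates_inputs. rewrite <- input_args_map, <- U, input_args_map.
    rewrite <- (map_id (input_args ms ts0)) at 2. apply map_ext_in.
    intros t It. apply ground_tsubst_id, Hgr, It. }
  exists C'. split; [exists r; auto|]. split; [exact Ep|]. split; [exact L|].
  exists s. split; [exact Hin|]. intros om Hom u1 u2 Iu.
  apply (safe_disequation_instances M C' s om u1 u2).
  - apply safe_clause_ren; auto.
  - intros x Ix Nx. apply (relevant_fixes _ _ _ Rel). rewrite lvars_app, in_app_iff.
    intros [I|I]; [apply (Ap x Ix), in_app_iff; auto | contradiction].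
  - intros x Ix. unfold input_vars in Ix.
    change (cpred C') with (cpred C) in Ix. rewrite Ep, L, Hms in Ix.
    split; [exact (instantiates_inputs_ground _ _ _ _ Hin Hgr x Ix) | auto].
  - apply guard_in, Iu.
  - rewrite gsubst_app in R. apply (basic_run_passes_guard P _ _ p ts G R).
    rewrite guard_gsubst. apply (in_map (asubst s) _ (ANeq u1 u2)), Iu.
Qed.

Lemma variant_clause_ren C C' r :
  variant_clause C C' -> injective_ren r -> variant_clause C (csubst (ren r) C').
Proof.
  intros [r' [Hr' ->]] Hr. exists (fun x => r (r' x)). split.
  - intros x y E. apply Hr', Hr, E.
  - rewrite csubst_comp. apply csubst_ext. reflexivity.
Qed.

Lemma guard_separated_ren ms C s ts r :
  injective_ren r -> instantiates_inputs ms C s ts -> guard_separated ms C s ->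
  exists s', instantiates_inputs ms (csubst (ren r) C) s' ts /\
             guard_separated ms (csubst (ren r) C) s'.
Proof.
  intros Hr Hin Hsep. destruct (inverse_ren r Hr) as [ri Hri].
  assert (Ein : input_args ms (cargs (csubst (ren r) C))
                = map (tsubst (ren r)) (input_args ms (cargs C))) by apply input_args_map.
  exists (fun y => s (ri y)). split.
  - unfold instantiates_inputs in *. rewrite Ein, map_tsubst_comp, <- Hin.
    apply map_tsubst_ext. intros x _. unfold ren. simpl. rewrite Hri. reflexivity.
  - intros om Hom u1 u2 Iu.
    change (cbody (csubst (ren r) C)) with (gsubst (ren r) (cbody C)) in Iu.
    rewrite guard_gsubst in Iu. apply in_map_iff in Iu as [[|v1 v2|] [E Iv]]; try discriminate.
    injection E as <- <-. rewrite !tsubst_comp. apply Hsep; auto.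
    intros x Ix. unfold ren. simpl. rewrite Hom, Hri; auto.
    rewrite Ein, lvars_ren. apply in_map, Ix.
Qed.

Lemma satisfiable_intro D V s :
  (forall x, In x V -> ground (s x)) -> (forall x, ~ In x V -> s x = Var x) ->
  (forall a, In a D -> exists u1 u2, a = ANeq u1 u2 /\
     forall t, tsubst t (tsubst s u1) <> tsubst t (tsubst s u2)) ->
  satisfiable D V.
Proof.
  intros Hg Hid Hd. exists s. split; [exact Hg|]. split; [exact Hid|].
  intros t Ht a Ia. apply in_map_iff in Ia as [b [<- Ib]].
  apply in_map_iff in Ib as [a0 [<- Ia0]].
  destruct (Hd a0 Ia0) as [u1 [u2 [-> Hne]]].
  assert (Gr : forall x, In x (tvars (tsubst s u1) ++ tvars (tsubst s u2)) -> ground (t x)).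
  { intros x Ix. apply Ht, gvars_in. exists (asubst s (ANeq u1 u2)).
    split; [apply in_map, Ia0 | exact Ix]. }
  simpl. repeat split; [apply ground_tsubst; intros; apply Gr, in_app_iff; auto..|apply Hne].
Qed.

Lemma guard_separated_instances ms C s sg :
  guard_separated ms C s ->
  (forall x, In x (lvars (input_args ms (cargs C))) -> sg x = s x /\ ground (s x)) ->
  forall u1 u2, In (ANeq u1 u2) (guard (cbody C)) ->
  forall t, tsubst t (tsubst sg u1) <> tsubst t (tsubst sg u2).
Proof.
  intros Sep Hsg u1 u2 Iu t. rewrite !tsubst_comp. apply Sep; auto.
  intros x Ix. destruct (Hsg x Ix) as [-> G]. apply ground_tsubst_id, G.
Qed.

Lemma separated_guards_satisfiable ms ts C1 C2 s1 s2 :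
  (forall t, In t (input_args ms ts) -> ground t) ->
  (forall x, In x (cvars C1) -> ~ In x (cvars C2)) ->
  instantiates_inputs ms C1 s1 ts -> instantiates_inputs ms C2 s2 ts ->
  guard_separated ms C1 s1 -> guard_separated ms C2 s2 ->
  let t1 := input_args ms (cargs C1) in
  let t2 := input_args ms (cargs C2) in
  unifiable t1 t2 /\
  forall th, is_mgu th t1 t2 ->
    satisfiable (gsubst th (guard (cbody C1) ++ guard (cbody C2))) (lvars (t1 ++ t2)).
Proof.
  intros Hgr Dis In1 In2 Sep1 Sep2 t1 t2.
  assert (Cv : forall C x, In x (lvars (input_args ms (cargs C))) -> In x (cvars C)).
  { intros C x Ix. apply lvars_in in Ix as [t [It Ixt]]. apply in_app_iff. left.
    apply lvars_in. exists t. split; [eapply input_args_in; eauto | exact Ixt]. }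
  set (g := fun x => if in_dec Nat.eq_dec x (cvars C1) then s1 x else s2 x).
  assert (G1 : forall x, In x (lvars t1) -> g x = s1 x /\ ground (s1 x)).
  { intros x Ix. split; [|eapply instantiates_inputs_ground; eauto].
    unfold g. destruct in_dec as [_|n]; [auto | destruct (n (Cv _ x Ix))]. }
  assert (G2 : forall x, In x (lvars t2) -> g x = s2 x /\ ground (s2 x)).
  { intros x Ix. split; [|eapply instantiates_inputs_ground; eauto].
    unfold g. destruct in_dec as [I|_]; [destruct (Dis x I (Cv _ x Ix)) | auto]. }
  assert (U : unifies g t1 t2).
  { unfold unifies. rewrite (map_tsubst_ext g s1 t1), (map_tsubst_ext g s2 t2) by firstorder.
    unfold t1, t2. rewrite In1, In2. reflexivity. }
  split; [exists g; exact U|]. intros th Hth.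
  set (V := lvars (t1 ++ t2)).
  assert (HV : forall x, In x V <-> In x (lvars t1) \/ In x (lvars t2)).
  { intros x. unfold V. rewrite lvars_app, in_app_iff. reflexivity. }
  assert (Hsg : forall x, In x V -> tsubst (restrict g V) (th x) = g x)
    by exact (mgu_restrict _ _ _ _ Hth U).
  apply (satisfiable_intro _ _ (restrict g V)).
  - intros x Ix. unfold restrict. destruct in_dec as [_|n]; [|contradiction].
    apply HV in Ix as [Ix|Ix];
      [destruct (G1 x Ix) as [-> G] | destruct (G2 x Ix) as [-> G]]; exact G.
  - intros x n. unfold restrict. destruct in_dec; tauto.
  - intros a Ia. apply in_map_iff in Ia as [b [<- Ib]].
    apply in_app_iff in Ib as [Ib|Ib]; destruct (guard_neq _ _ Ib) as [u1 [u2 ->]];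
      exists (tsubst th u1), (tsubst th u2); split; auto; intros t;
      rewrite !(tsubst_comp (restrict g V) th).
    + apply (guard_separated_instances ms C1 s1); auto.
      intros x Ix. rewrite Hsg by (apply HV; auto). apply G1, Ix.
    + apply (guard_separated_instances ms C2 s2); auto.
      intros x Ix. rewrite Hsg by (apply HV; auto). apply G2, Ix.
Qed.

Lemma mutually_exclusive_not_both_derive P M C1 C2 p0 ts0 G0 p1 ts1 G1 p2 ts2 G2 :
  safe_clause M C1 -> safe_clause M C2 -> mutually_exclusive M C1 C2 ->
  atom_sat M (APred p0 ts0) ->
  derives_with P C1 (APred p0 ts0 :: G0) (APred p1 ts1 :: G1) ->
  derives_with P C2 (APred p0 ts0 :: G0) (APred p2 ts2 :: G2) -> False.
Proof.
  intros HC1 HC2 Hme [ms [Hms Hgr]] D1 D2.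
  destruct (derivation_separates_guard _ _ _ _ _ _ _ _ _ _ HC1 Hms Hgr D1)
    as [C1' [V1 [P1 [L1 [s1 [In1 Sep1]]]]]].
  destruct (derivation_separates_guard _ _ _ _ _ _ _ _ _ _ HC2 Hms Hgr D2)
    as [C2' [V2 [P2 [L2 [s2 [In2 Sep2]]]]]].
  (* Even and odd variables make the two variants renamed apart. *)
  set (ev := fun x => 2 * x). set (od := fun x => S (2 * x)).
  assert (Hev : injective_ren ev) by (intros x y; unfold ev; lia).
  assert (Hod : injective_ren od) by (intros x y; unfold od; lia).
  destruct (guard_separated_ren _ _ _ _ _ Hev In1 Sep1) as [s1' [In1' Sep1']].
  destruct (guard_separated_ren _ _ _ _ _ Hod In2 Sep2) as [s2' [In2' Sep2']].
  assert (Dis : forall x, In x (cvars (csubst (ren ev) C1')) ->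
                          ~ In x (cvars (csubst (ren od) C2'))).
  { rewrite !cvars_ren. intros x I1 I2.
    apply in_map_iff in I1 as [y1 [<- _]], I2 as [y2 [E _]]. unfold ev, od in E. lia. }
  assert (Hms' : M (cpred (csubst (ren ev) C1')) (length (cargs (csubst (ren ev) C1'))) = Some ms).
  { simpl. rewrite length_map, P1, L1. exact Hms. }
  destruct (separated_guards_satisfiable _ _ _ _ _ _ Hgr Dis In1' In2' Sep1' Sep2') as [Un Sat].
  assert (Pr : cpred (csubst (ren ev) C1') = cpred (csubst (ren od) C2')) by (simpl; congruence).
  assert (Ln : length (cargs (csubst (ren ev) C1')) = length (cargs (csubst (ren od) C2')))
    by (simpl; rewrite !length_map; congruence).
  destruct (Hme _ _ (variant_clause_ren _ _ _ V1 Hev) (variant_clause_ren _ _ _ V2 Hod)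
              Dis Pr Ln ms Hms') as [NU|[th [Hth NS]]].
  - exact (NU Un).
  - exact (NS (Sat th Hth)).
Qed.

Theorem lemma16 (P : program) (M : mode) :
  mode_for M P ->
  safe M P ->
  prog_satisfies M P ->
  (forall C1 C2, P C1 -> P C2 -> C1 <> C2 ->
     ~ unit_clause C1 -> ~ unit_clause C2 -> mutually_exclusive M C1 C2) ->
  forall (p0 : nat) (ts0 : list term) (G0 : goal),
    atom_sat M (APred p0 ts0) -> basic_goal G0 ->
    forall p1 ts1 G1 p2 ts2 G2,
      derives P (APred p0 ts0 :: G0) (APred p1 ts1 :: G1) ->
      derives P (APred p0 ts0 :: G0) (APred p2 ts2 :: G2) ->
      goal_variant (APred p1 ts1 :: G1) (APred p2 ts2 :: G2).
Proof.
  (* A single =>-step only needs the inputs of A0 to be ground. *)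
  intros _ Hsafe _ Hme p0 ts0 G0 HA HG0 p1 ts1 G1 p2 ts2 G2 [C1 [PC1 D1]] [C2 [PC2 D2]].
  destruct (classic (C1 = C2)) as [<-|Ne].
  - destruct D1 as [h1 [S1 R1]], D2 as [h2 [S2 R2]].
    destruct (resolvent_variant _ _ _ _ _ _ _ S1 S2) as [r [Hr <-]].
    exact (basic_run_variant _ _ _ R1 r _ Hr R2).
  - exfalso. apply (mutually_exclusive_not_both_derive P M C1 C2 p0 ts0 G0 p1 ts1 G1 p2 ts2 G2);
      auto.
    apply Hme; auto; eapply derives_with_nonbasic_not_unit; eauto.
Qed.
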